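(* Let $k\ge1$. The generating function of spanning oriented forests of the hypercube $\{0,1\}^k$, with a weight $z$ per root and a weight $y_i^j$ for each edge changing the $i$-th coordinate to the value $j$, is $$\prod_{J\subseteq\{1,\dots,k\}}\Big(z+\sum_{i\in J}(y_i^0+y_i^1)\Big).$$
   Context: The hypercube $\{0,1\}^k$ is viewed as a directed graph with, for any two points differing in exactly one coordinate, an edge in each direction. A spanning oriented forest is a subgraph containing all vertices, with no cycle, in which every vertex has outdegree $0$ or $1$; the vertices of outdegree $0$ are its roots. Its weight is $z^{\#\text{roots}}$ times the product of the weights of its edges, where an edge changing coordinate $i$ to the value $j\in\{0,1\}$ has weight $y_i^j$; $z,y_i^j$ are indeterminates. The product is over all subsets $J$, including $J=\emptyset$. *)

From HB Require Import structures.
From mathcomp Require Import all_boot all_order all_algebra.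
Set Implicit Arguments. Unset Strict Implicit. Unset Printing Implicit Defensive.
Import GRing.Theory.
Local Open Scope ring_scope.

(* Vertices of the hypercube {0,1}^k : functions 'I_k -> bool
   (false = 0, true = 1; coordinate i+1 of the paper is index i : 'I_k). *)
Definition cube (k : nat) := {ffun 'I_k -> bool}.

Definition cube_adj (k : nat) (u v : cube k) : bool :=
  #|[set i : 'I_k | u i != v i]| == 1%N.

(* A subgraph in which every vertex has outdegree 0 or 1 is encoded by a
   map f : V -> option V : f v = None means v is a root (outdegree 0),
   f v = Some w means the unique out-edge is v -> w. *)
Definition forest_rel (k : nat) (f : {ffun cube k -> option (cube k)}) : rel (cube k) :=
  fun v w => f v == Some w.

Definition spanning_oriented_forest (k : nat)
  (f : {ffun cube k -> option (cube k)}) : bool :=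
  [forall v : cube k, forall w : cube k, (f v == Some w) ==> cube_adj v w] &&
  [forall v : cube k, forall w : cube k,
     forest_rel f v w ==> ~~ connect (forest_rel f) w v].

(* Weight of the edge u -> v: the edge changes the unique coordinate i where
   u and v differ to the value v i, so its weight is y i (v i)
   (the product below has exactly one factor when u, v are adjacent). *)
Definition edge_weight (R : comPzRingType) (k : nat) (y : 'I_k -> bool -> R)
  (u v : cube k) : R :=
  \prod_(i : 'I_k | u i != v i) y i (v i).

Definition forest_weight (R : comPzRingType) (k : nat) (z : R) (y : 'I_k -> bool -> R)
  (f : {ffun cube k -> option (cube k)}) : R :=
  \prod_(v : cube k) (if f v is Some w then edge_weight y v w else z).

From HB Require Import structures.
From mathcomp Require Import all_boot all_order all_algebra.
Set Implicit Arguments. Unset Strict Implicit. Unset Printing Implicit Defensive.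
Import GRing.Theory.
Local Open Scope ring_scope.

(* Both sides are determinants.  For edge weights w and root weights z on a
   finite vertex set, det (L_w + diag z) is the generating function of rooted
   spanning forests (the matrix-forest theorem); it follows by induction on the
   number of vertices, expanding along the row of one vertex and contracting
   that vertex into its successor.  Ordering the vertices of {0,1}^(k+1) by
   their first coordinate, its matrix is the block matrix
   [[M + a, -a], [-b, M + b]] with M the matrix of {0,1}^k, a = y_1^1 and
   b = y_1^0, whose determinant is det M * det (M + (a + b)); iterating this
   gives the product over all subsets J. *)

Lemma sum_option (V : nmodType) (T : finType) (F : option T -> V) :
  \sum_(c : option T) F c = F None + \sum_(t : T) F (Some t).
Proof.
rewrite (perm_big (None :: map Some (index_enum T))) /=; first by rewrite big_cons big_map.
apply: uniq_perm; first exact: index_enum_uniq.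
  rewrite /= map_inj_uniq ?index_enum_uniq //; last exact: Some_inj.
  by rewrite andbT; apply/mapP => -[].
by case=> [x|]; rewrite mem_index_enum // in_cons /= (mem_map Some_inj) mem_index_enum.
Qed.

Lemma eq_Some (T : eqType) (x y : T) : (Some x == Some y) = (x == y).
Proof. by []. Qed.

Lemma sum_pred1 (V : nmodType) (I : finType) (a : I) (c : V) :
  \sum_u (if a == u then c else 0) = c.
Proof.
rewrite (eq_bigr (fun u => if u == a then c else 0)) => [|u _]; last by rewrite eq_sym.
by rewrite -big_mkcond big_pred1_eq.
Qed.

Lemma sum_pred1_neq (V : nmodType) (I : finType) (x u : I) (c : V) :
  \sum_(v | v != x) (if u == v then c else 0) = if u == x then 0 else c.
Proof.
rewrite -big_mkcondr; have [->|nux] := eqVneq u x.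
  by rewrite big_pred0 // => v; rewrite /= [x == _]eq_sym andNb.
rewrite (big_pred1 u) // => v; rewrite /= [u == _]eq_sym.
by have [->|_] := eqVneq v u; rewrite ?nux ?andbF.
Qed.

(** * Rooted forests of a finite map *)

Section FunctionalForests.
Variable T : finType.
Implicit Type f : {ffun T -> option T}.

Definition succ_rel f : rel T := fun v w => f v == Some w.

Definition acyclic f : bool :=
  [forall v, forall w, succ_rel f v w ==> ~~ connect (succ_rel f) w v].

Definition reaches_root f (o : option T) := exists m, iter m (obind f) o = None.

Lemma iter_obind_None f m : iter m (obind f) None = None.
Proof. by elim: m => //= m ->. Qed.

Lemma connect_succ_iter f v w :
  connect (succ_rel f) v w -> exists m, iter m (obind f) (Some v) = Some w.
Proof.
case/connectP => p; elim: p v => [|x p IH] v /=; first by move=> _ ->; exists 0.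
case/andP => /eqP fv /IH{}IH /IH[m xw].
by exists m.+1; rewrite iterSr /= fv.
Qed.

Lemma acyclicP f : reflect (forall v, reaches_root f (Some v)) (acyclic f).
Proof.
apply: (iffP forallP) => [noloop v | root v].
- pose reach v := #|[set x | connect (succ_rel f) v x]|.
  have [N] := ubnP (reach v); elim: N v => // N IH v; rewrite ltnS => reach_vN.
  case fv: (f v) => [w|]; last by exists 1.
  have vw : succ_rel f v w by rewrite /succ_rel fv.
  have [|m wm] := IH w.
    apply: leq_trans reach_vN; apply/proper_card/properP; split.
      by apply/subsetP => x; rewrite !inE; apply: connect_trans (connect1 vw).
    exists v; rewrite !inE ?connect0 //.
    by have := forallP (noloop v) w; rewrite vw.
  by exists m.+1; rewrite iterSr /= fv.
- apply/forallP => w; apply/implyP => /eqP fvw.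
  apply/negP => /connect_succ_iter[m wv].
  have cyc t : iter (t * m.+1) (obind f) (Some v) = Some v.
    by elim: t => // t IHt; rewrite mulSn iterD IHt iterSr /= fvw.
  have [m0 m0v] := root v.
  by have := cyc m0; rewrite mulnSr iterD m0v iter_obind_None.
Qed.

Variable R : comPzRingType.

Definition vertex_wt (w : T -> T -> R) (z : T -> R) v (c : option T) : R :=
  if c is Some u then w v u else z v.

Definition forest_wt w z f : R := \prod_v vertex_wt w z v (f v).

Definition forest_gf w z : R := \sum_(f | acyclic f) forest_wt w z f.

End FunctionalForests.

Section ForestBijection.
Variables (R : comPzRingType) (T1 T2 : finType) (e : T1 -> T2) (e' : T2 -> T1).
Hypotheses (eK : cancel e e') (e'K : cancel e' e).

Definition forest_conj (f : {ffun T1 -> option T1}) : {ffun T2 -> option T2} :=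
  [ffun v => omap e (f (e' v))].

Lemma iter_forest_conj f m o :
  iter m (obind (forest_conj f)) (omap e o) = omap e (iter m (obind f) o).
Proof.
elim: m => //= m ->.
by case: (iter m (obind f) o) => [a|] //=; rewrite ffunE eK.
Qed.

Lemma acyclic_forest_conj f : acyclic (forest_conj f) = acyclic f.
Proof.
apply/acyclicP/acyclicP => root v.
  have [m vm] := root (e v); exists m.
  by move: vm; rewrite -[Some (e v)]/(omap e (Some v)) iter_forest_conj; case: (iter _ _ _).
have [m vm] := root (e' v); exists m.
by rewrite -(e'K v) -[Some (e (e' v))]/(omap e (Some (e' v))) iter_forest_conj vm.
Qed.

Lemma forest_gf_conj (w : T2 -> T2 -> R) (z : T2 -> R) :
  forest_gf (fun a b => w (e a) (e b)) (fun a => z (e a)) = forest_gf w z.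
Proof.
rewrite /forest_gf (reindex forest_conj); last first.
  apply: onW_bij; exists (fun f2 : {ffun T2 -> option T2} => [ffun a => omap e' (f2 (e a))]).
    move=> f1; apply/ffunP => a; rewrite !ffunE eK.
    by case: (f1 a) => [b|] //=; rewrite eK.
  move=> f2; apply/ffunP => v; rewrite !ffunE e'K.
  by case: (f2 v) => [b|] //=; rewrite e'K.
apply: eq_big => f; first by rewrite acyclic_forest_conj.
move=> _; rewrite /forest_wt (reindex e) /=; last by apply: onW_bij; exists e'.
by apply: eq_bigr => a _; rewrite ffunE eK; case: (f a).
Qed.

End ForestBijection.

(** * Contracting a vertex *)

Section Contraction.
Variable n : nat.
Implicit Types (p : option 'I_n) (h : {ffun 'I_n -> option 'I_n.+1}).

Definition lift0_opt p : option 'I_n.+1 := omap (lift ord0) p.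

(* Contraction of vertex 0 into its successor p: an edge into 0 is redirected
   to p, and its source becomes a root if p = None. *)
Definition contract p (c : option 'I_n.+1) : option 'I_n :=
  if c is Some v then (if unlift ord0 v is Some y then Some y else p) else None.

Definition ffcons (a : option 'I_n.+1) h : {ffun 'I_n.+1 -> option 'I_n.+1} :=
  [ffun i => if unlift ord0 i is Some j then h j else a].

Definition contract_ffun p h : {ffun 'I_n -> option 'I_n} :=
  [ffun x => contract p (h x)].

Lemma contract_lift p y : contract p (Some (lift ord0 y)) = Some y.
Proof. by rewrite /= liftK. Qed.

Lemma contract_ord0 p : contract p (Some ord0) = p.
Proof. by rewrite /= unlift_none. Qed.

Lemma contract_lift0_opt p : contract p (lift0_opt p) = p.
Proof. by case: p => [u|] //=; rewrite liftK. Qed.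

Lemma lift0_opt_neq0 p : lift0_opt p != Some ord0.
Proof. by case: p => [u|] //=; rewrite (inj_eq Some_inj) eq_sym neq_lift. Qed.

Lemma ffcons0 a h : ffcons a h ord0 = a.
Proof. by rewrite ffunE unlift_none. Qed.

Lemma ffcons_lift a h x : ffcons a h (lift ord0 x) = h x.
Proof. by rewrite ffunE liftK. Qed.

Lemma acyclic_ffcons_loop h : acyclic (ffcons (Some ord0) h) = false.
Proof.
apply/acyclicP => /(_ ord0)[m].
suff -> : iter m (obind (ffcons (Some ord0) h)) (Some ord0) = Some ord0 by [].
by elim: m => // m IH; rewrite iterS IH [obind _ _]/= ffcons0.
Qed.

Section ContractForest.
Variables (p : option 'I_n) (h : {ffun 'I_n -> option 'I_n.+1}).
Let f := ffcons (lift0_opt p) h.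
Let g := contract_ffun p h.

Lemma contract_step s :
  s != Some ord0 -> contract p (obind f s) = obind g (contract p s).
Proof.
case: s => [v|] //= nv.
by case: (unliftP ord0 v) nv => [x ->|->] //= _; rewrite /f ffcons_lift ffunE.
Qed.

Lemma reaches_root_uncontract m s :
  s != Some ord0 -> iter m (obind g) (contract p s) = None -> reaches_root f s.
Proof.
elim: m s => [|m IH] s ns.
  case: s ns => [v|] ns; last by exists 0.
  by case: (unliftP ord0 v) ns => [x ->|->] //=; rewrite liftK.
rewrite iterSr -contract_step //.
have [fs0 | fs_n0] := eqVneq (obind f s) (Some ord0).
  rewrite fs0 contract_ord0 => pm.
  have [|m' Hm'] := IH _ (lift0_opt_neq0 p); first by rewrite contract_lift0_opt.
  by exists m'.+2; rewrite !iterSr fs0 /= /f ffcons0.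
by move=> /(IH _ fs_n0)[m' Hm']; exists m'.+1; rewrite iterSr.
Qed.

Lemma reaches_root_contract m s :
  iter m (obind f) s = None -> reaches_root g (contract p s).
Proof.
elim: m s => [|m IH] s; first by move=> /= ->; exists 0.
rewrite iterSr => /IH.
have [->|ns] := eqVneq s (Some ord0).
  by rewrite [obind _ _]/= /f ffcons0 contract_lift0_opt contract_ord0.
by rewrite contract_step // => -[m' Hm']; exists m'.+1; rewrite iterSr.
Qed.

Lemma acyclic_contract : acyclic f = acyclic g.
Proof.
apply/acyclicP/acyclicP => root.
  move=> x; have [m xm] := root (lift ord0 x).
  by rewrite -(contract_lift p x); apply: reaches_root_contract xm.
have [m pm] : reaches_root g p by case: p => [u|]; [exact: root | exists 0].
have [m' Hm'] : reaches_root f (lift0_opt p).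
  by apply: (reaches_root_uncontract (m := m)); rewrite ?lift0_opt_neq0 ?contract_lift0_opt.
move=> v; case: (unliftP ord0 v) => [x ->|->]; last first.
  by exists m'.+1; rewrite iterSr /= /f ffcons0.
have [mx xm] := root x; apply: (reaches_root_uncontract (m := mx)).
  exact: (lift0_opt_neq0 (Some x)).
by rewrite contract_lift.
Qed.

End ContractForest.
End Contraction.

Section ForestRecursion.
Variables (R : comPzRingType) (n : nat).
Variables (w : 'I_n.+1 -> 'I_n.+1 -> R) (z : 'I_n.+1 -> R).

(* Weights after contracting vertex 0 into p: the edge x -> 0 becomes x -> p,
   or contributes to the root weight of x if p = None. *)
Definition wcontr (p : option 'I_n) (x y : 'I_n) : R :=
  w (lift ord0 x) (lift ord0 y) + (if p == Some y then w (lift ord0 x) ord0 else 0).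

Definition zcontr (p : option 'I_n) (x : 'I_n) : R :=
  z (lift ord0 x) + (if p == None then w (lift ord0 x) ord0 else 0).

Lemma sum_vertex_wt_contract p x (o : option 'I_n) :
  \sum_(c | contract p c == o) vertex_wt w z (lift ord0 x) c
  = vertex_wt (wcontr p) (zcontr p) x o.
Proof.
rewrite big_mkcond sum_option big_ord_recl contract_ord0.
under eq_bigr => y _ do rewrite contract_lift.
case: o => [y|] /=.
- rewrite add0r (eq_bigr (fun y' => if y' == y then w (lift ord0 x) (lift ord0 y') else 0)) //.
  by rewrite -big_mkcond big_pred1_eq /wcontr addrC; case: eqP.
- by rewrite big1 ?addr0 // /zcontr; case: eqP.
Qed.

Lemma forest_wt_ffcons a h :
  forest_wt w z (ffcons a h) = vertex_wt w z ord0 a * \prod_x vertex_wt w z (lift ord0 x) (h x).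
Proof.
rewrite /forest_wt big_ord_recl ffcons0; congr (_ * _).
by apply: eq_bigr => x _; rewrite ffcons_lift.
Qed.

Lemma forest_gf_root p :
  \sum_(h | acyclic (ffcons (lift0_opt p) h)) forest_wt w z (ffcons (lift0_opt p) h)
  = vertex_wt w z ord0 (lift0_opt p) * forest_gf (wcontr p) (zcontr p).
Proof.
under eq_bigr => h _ do rewrite forest_wt_ffcons.
rewrite -big_distrr /=; congr (_ * _).
under eq_bigl => h do rewrite acyclic_contract.
rewrite (partition_big (contract_ffun p) (@acyclic _)) //=.
apply: eq_bigr => g acyc_g; rewrite /forest_wt.
under [RHS]eq_bigr => v _ do rewrite -(sum_vertex_wt_contract p v (g v)).
rewrite (bigA_distr_big_dep (fun v c => contract p c == g v)); apply: eq_bigl => h.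
apply/andP/familyP => [[_ /eqP <-] x | hg]; first by rewrite unfold_in /= ffunE.
suff -> : contract_ffun p h = g by rewrite acyc_g.
by apply/ffunP => x; rewrite ffunE; have := hg x; rewrite unfold_in => /eqP.
Qed.

Lemma forest_gf_rec : forest_gf w z =
  z ord0 * forest_gf (wcontr None) (zcontr None)
  + \sum_u w ord0 (lift ord0 u) * forest_gf (wcontr (Some u)) (zcontr (Some u)).
Proof.
rewrite /forest_gf (reindex (fun q => ffcons q.1 q.2)) /=; last first.
  apply: onW_bij; exists (fun f : {ffun 'I_n.+1 -> option 'I_n.+1} =>
                            (f ord0, [ffun x => f (lift ord0 x)])).
    by case=> a h /=; rewrite ffcons0; congr pair; apply/ffunP => x; rewrite ffunE ffcons_lift.
  move=> f; apply/ffunP => i; rewrite ffunE.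
  by case: (unliftP ord0 i) => [j ->|->] //=; rewrite ffunE.
rewrite (eq_bigl (fun q => xpredT q.1 && acyclic (ffcons q.1 q.2))) //.
rewrite -(pair_big_dep xpredT (fun a h => acyclic (ffcons a h))
                       (fun a h => forest_wt w z (ffcons a h))) /=.
rewrite sum_option big_ord_recl (eq_bigl xpred0 _ (@acyclic_ffcons_loop _)).
rewrite big_pred0_eq add0r.
congr (_ + _); first exact: (forest_gf_root None).
by apply: eq_bigr => u _; exact: (forest_gf_root (Some u)).
Qed.

End ForestRecursion.

(** * The matrix-forest theorem *)

Definition laplacian (R : comPzRingType) n (w : 'I_n -> 'I_n -> R) (z : 'I_n -> R) :
  'M[R]_n :=
  \matrix_(i, j) if i == j then z i + \sum_(u | u != i) w i u else - w i j.

Lemma laplacian_add_scalar (R : comPzRingType) n (w : 'I_n -> 'I_n -> R) (z s : R) :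
  laplacian w (fun _ => z) + s%:M = laplacian w (fun _ => z + s).
Proof.
apply/matrixP => i j; rewrite !mxE; case: eqP => _ /=.
  by rewrite mulr1n addrAC.
by rewrite mulr0n addr0.
Qed.

Lemma lift0_rshift n (i : 'I_n) : lift ord0 i = rshift 1 i :> 'I_(1 + n).
Proof. exact/val_inj. Qed.

Lemma ord0_lshift n : ord0 = lshift n ord0 :> 'I_(1 + n).
Proof. exact/val_inj. Qed.

Lemma split_lift0 n (i : 'I_n) : split (lift ord0 i : 'I_(1 + n)) = inr i.
Proof. by rewrite lift0_rshift; apply: (unsplitK (inr i)). Qed.

Section BorderedDeterminant.
Variables (R : comPzRingType) (n : nat).

Lemma expand_det_col_mx (v : 'rV[R]_(1 + n)) (B : 'M_(n, 1 + n)) :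
  \det (col_mx v B) = \sum_j v 0 j * cofactor (col_mx 0 B) ord0 j.
Proof.
rewrite (expand_det_row _ ord0); apply: eq_bigr => j _.
rewrite {1}(ord0_lshift n) (col_mxEu v B); congr (_ * (_ * \det _)).
by apply/matrixP => a b; rewrite !mxE split_lift0.
Qed.

Lemma det_rsubmx_add_mul (B : 'M[R]_(n, 1 + n)) (e : 'rV_n) :
  \det (rsubmx B + lsubmx B *m e) = \det (col_mx (row_mx 1%:M (- e)) B).
Proof.
have factor : block_mx 1%:M 0 (lsubmx B) (rsubmx B + lsubmx B *m e) =
    block_mx 1%:M (- e) (lsubmx B) (rsubmx B) *m block_mx 1%:M e 0 1%:M.
  by rewrite mulmx_block !mulmx1 !mulmx0 !mul1mx !addr0 addrN addrC.
have := congr1 determinant factor.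
rewrite det_lblock det1 mul1r => ->.
by rewrite det_mulmx det_ublock !det1 !mulr1 block_mxEv hsubmxK.
Qed.

Lemma sum_row_mx1 (e : 'rV[R]_n) (K : 'I_(1 + n) -> R) :
  \sum_j row_mx 1%:M e 0 j * K j = K ord0 + \sum_u e 0 u * K (lift ord0 u).
Proof.
rewrite big_ord_recl {1}(ord0_lshift n) row_mxEl mxE mul1r; congr (_ + _).
by apply: eq_bigr => u _; rewrite lift0_rshift row_mxEr.
Qed.
End BorderedDeterminant.

Lemma det_block_scalar (R : comPzRingType) n (X : 'M[R]_n) (a b : R) :
  \det (block_mx (X + a%:M) (- a%:M) (- b%:M) (X + b%:M))
  = \det X * \det (X + (a + b)%:M).
Proof.
set A := block_mx _ _ _ _.
have triangular : block_mx 1%:M (- 1%:M) 0 1%:M *m (A *m block_mx 1%:M 1%:M 0 1%:M)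
                  = block_mx (X + (a + b)%:M) 0 (- b%:M) X.
  have e1 : - b%:M + (X + b%:M) = X by rewrite addrCA addNr addr0.
  rewrite /A !mulmx_block !mulmx1 !mul1mx !mulmx0 !mul0mx !addr0 !add0r e1.
  by rewrite !mulNmx !mul1mx opprK addrK subrr raddfD addrA.
have := congr1 determinant triangular.
rewrite !det_mulmx !det_ublock !det1 !mulr1 !mul1r => ->.
by rewrite det_lblock mulrC.
Qed.

Section LaplacianRecursion.
Variables (R : comPzRingType) (n : nat).
Variables (w : 'I_n.+1 -> 'I_n.+1 -> R) (z : 'I_n.+1 -> R).
Let L : 'M[R]_(1 + n) := laplacian w z.

Definition delta_opt (p : option 'I_n) : 'rV[R]_n :=
  if p is Some u then delta_mx 0 u else 0.

Lemma delta_optE p y : delta_opt p 0 y = (p == Some y)%:R.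
Proof. by case: p => [u|]; rewrite !mxE //= eq_sym. Qed.

Lemma sum_lift0 (F : 'I_n.+1 -> R) x :
  \sum_(v | v != lift ord0 x) F v = F ord0 + \sum_(y | y != x) F (lift ord0 y).
Proof. by rewrite big_mkcond big_ord_recl [in RHS]big_mkcond. Qed.

(* The contracted laplacian is L with column 0 added to column u (when
   p = Some u), then row and column 0 deleted. *)
Lemma laplacian_contract p :
  rsubmx (dsubmx L) + lsubmx (dsubmx L) *m delta_opt p
  = laplacian (wcontr w p) (zcontr w z p).
Proof.
apply/matrixP => x y; rewrite !mxE big_ord1 !mxE delta_optE -!lift0_rshift -ord0_lshift.
rewrite (inj_eq lift_inj) (eq_sym _ ord0) (negbTE (neq_lift _ _)) mulNr mulr_natr mulrb.
have [<-|nxy] := eqVneq x y; last first.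
  by rewrite /wcontr opprD; case: (p == Some y).
rewrite (sum_lift0 (w (lift ord0 x))) /zcontr /wcontr.
case: p => [u|] /=; last by rewrite big_split big1_eq /= subr0 !addr0 addrA.
under [in RHS]eq_bigr => v _ do rewrite eq_Some.
rewrite big_split /= eq_Some addr0 addrA.
by rewrite sum_pred1_neq; case: (u == x); rewrite ?subr0 ?addr0 addrAC ?addrK ?addrA.
Qed.

Lemma det_laplacian_rec : \det (laplacian w z) =
  z ord0 * \det (laplacian (wcontr w None) (zcontr w z None))
  + \sum_u w ord0 (lift ord0 u) * \det (laplacian (wcontr w (Some u)) (zcontr w z (Some u))).
Proof.
pose K j := cofactor (col_mx 0 (dsubmx L)) ord0 j.
have det_contract p : \det (laplacian (wcontr w p) (zcontr w z p))
    = K ord0 - (if p is Some v then K (lift ord0 v) else 0).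
  rewrite -laplacian_contract det_rsubmx_add_mul expand_det_col_mx sum_row_mx1.
  under eq_bigr => u _ do rewrite mxE delta_optE mulNr.
  rewrite sumrN; congr (_ - _); case: p => [v|]; last by rewrite big1 // => u; rewrite mul0r.
  rewrite (bigD1 v) //= eqxx mul1r big1 ?addr0 // => u uv.
  by rewrite eq_Some eq_sym (negbTE uv) mul0r.
have row0 j : usubmx L 0 j = laplacian w z ord0 j.
  by rewrite [LHS]mxE; congr (laplacian w z _ _); apply/val_inj.
rewrite -[laplacian w z](vsubmxK L) expand_det_col_mx big_ord_recl row0.
under eq_bigr => u _ do rewrite row0 mxE (negbTE (neq_lift _ _)) mulNr.
rewrite mxE eqxx.
under [in RHS]eq_bigr => u _ do rewrite det_contract mulrBr.
rewrite det_contract subr0 big_split /= !sumrN -big_distrl addrA -mulrDl.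
by rewrite [in LHS]big_mkcond big_ord_recl /= add0r.
Qed.
End LaplacianRecursion.

Theorem det_laplacian (R : comPzRingType) n (w : 'I_n -> 'I_n -> R) (z : 'I_n -> R) :
  \det (laplacian w z) = forest_gf w z.
Proof.
elim: n w z => [|n IH] w z.
  rewrite det_mx00 /forest_gf (big_pred1 [ffun => None]) ?/forest_wt ?big_ord0 // => f.
  by rewrite /= (_ : f = [ffun => None]) ?eqxx; [apply/forallP => -[] | apply/ffunP => -[]].
rewrite det_laplacian_rec forest_gf_rec IH; congr (_ + _).
by apply: eq_bigr => u _; rewrite IH.
Qed.

(** * The hypercube *)

Fixpoint pow2 (k : nat) : nat := if k is k'.+1 then pow2 k' + pow2 k' else 1.

Definition cube_cons k (c : cube k) (b : bool) : cube k.+1 :=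
  [ffun i => if unlift ord0 i is Some j then c j else b].

Definition cube_behead k (c : cube k.+1) : cube k := [ffun j => c (lift ord0 j)].

Lemma cube_cons0 k (c : cube k) b : cube_cons c b ord0 = b.
Proof. by rewrite ffunE unlift_none. Qed.

Lemma cube_cons_lift k (c : cube k) b j : cube_cons c b (lift ord0 j) = c j.
Proof. by rewrite ffunE liftK. Qed.

Lemma cube_consK k (c : cube k) b : cube_behead (cube_cons c b) = c.
Proof. by apply/ffunP => j; rewrite ffunE cube_cons_lift. Qed.

Lemma cube_beheadK k (c : cube k.+1) : cube_cons (cube_behead c) (c ord0) = c.
Proof.
apply/ffunP => i; rewrite ffunE.
by case: (unliftP ord0 i) => [j ->|->] //; rewrite ffunE.
Qed.

(* Vertices are enumerated with the first coordinate as the most significant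
   bit, so that the two halves of the enumeration are the two facets. *)
Fixpoint cube_of_ord k : 'I_(pow2 k) -> cube k :=
  match k return 'I_(pow2 k) -> cube k with
  | 0 => fun _ => [ffun _ => false]
  | k'.+1 => fun i => match split i with
                      | inl a => cube_cons (cube_of_ord a) false
                      | inr b => cube_cons (cube_of_ord b) true
                      end
  end.

Fixpoint ord_of_cube k : cube k -> 'I_(pow2 k) :=
  match k return cube k -> 'I_(pow2 k) with
  | 0 => fun _ => ord0
  | k'.+1 => fun c => if c ord0 then rshift (pow2 k') (ord_of_cube (cube_behead c))
                      else lshift (pow2 k') (ord_of_cube (cube_behead c))
  end.

Lemma cube_of_ord_lshift k (a : 'I_(pow2 k)) :
  @cube_of_ord k.+1 (lshift (pow2 k) a) = cube_cons (cube_of_ord a) false.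
Proof. by rewrite /= (unsplitK (inl a)). Qed.

Lemma cube_of_ord_rshift k (a : 'I_(pow2 k)) :
  @cube_of_ord k.+1 (rshift (pow2 k) a) = cube_cons (cube_of_ord a) true.
Proof. by rewrite /= (unsplitK (inr a)). Qed.

Lemma ord_of_cubeK k : cancel (@ord_of_cube k) (@cube_of_ord k).
Proof.
elim: k => [|k IH] c; first by apply/ffunP => -[].
rewrite /=; case c0: (c ord0).
  by rewrite (unsplitK (inr _)) IH -c0 cube_beheadK.
by rewrite (unsplitK (inl _)) IH -c0 cube_beheadK.
Qed.

Lemma cube_of_ordK k : cancel (@cube_of_ord k) (@ord_of_cube k).
Proof.
elim: k => [|k IH] i; first by rewrite (ord1 i).
rewrite -[i]splitK; case: (split i) => a; rewrite [unsplit _]/=.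
  by rewrite cube_of_ord_lshift /= cube_cons0 cube_consK IH.
by rewrite cube_of_ord_rshift /= cube_cons0 cube_consK IH.
Qed.

Lemma cube_of_ord_inj k : injective (@cube_of_ord k).
Proof. exact: can_inj (@cube_of_ordK k). Qed.

Lemma card_set_ord_recl k (P : pred 'I_k.+1) :
  #|[set i | P i]| = (P ord0 + #|[set j : 'I_k | P (lift ord0 j)]|)%N.
Proof.
rewrite -!sum1_card big_mkcond big_ord_recl /= inE [in RHS]big_mkcond /=.
by case: (P ord0); congr addn; apply: eq_bigr => j _; rewrite !inE.
Qed.

Lemma cube_diff_eq0 k (c c' : cube k) : ([set j | c j != c' j] == set0) = (c == c').
Proof.
apply/eqP/eqP => [c_c'|->]; last by apply/setP => j; rewrite !inE eqxx.
apply/ffunP => j; apply/eqP/negPn/negP => cj.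
by have := in_set0 j; rewrite -c_c' inE cj.
Qed.

Lemma cube_adj_cons k (c c' : cube k) b b' :
  cube_adj (cube_cons c b) (cube_cons c' b') =
  if b == b' then cube_adj c c' else c == c'.
Proof.
rewrite /cube_adj card_set_ord_recl !cube_cons0.
under eq_finset => j do rewrite !cube_cons_lift.
by case: b; case: b' => //=; rewrite ?add0n // add1n eqSS cards_eq0 cube_diff_eq0.
Qed.

Section CubeWeights.
Variable R : comPzRingType.

Definition ybehead k (y : 'I_k.+1 -> bool -> R) : 'I_k -> bool -> R :=
  fun j => y (lift ord0 j).

Definition adj_weight k (y : 'I_k -> bool -> R) (u v : cube k) : R :=
  if cube_adj u v then edge_weight y u v else 0.

Lemma edge_weight_cons k (y : 'I_k.+1 -> bool -> R) (c c' : cube k) b b' :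
  edge_weight y (cube_cons c b) (cube_cons c' b')
  = (if b != b' then y ord0 b' else 1) * edge_weight (ybehead y) c c'.
Proof.
rewrite /edge_weight big_mkcond big_ord_recl !cube_cons0 [in RHS]big_mkcond /=.
by congr (_ * _); apply: eq_bigr => j _; rewrite !cube_cons_lift.
Qed.

Lemma edge_weight_refl k (y : 'I_k -> bool -> R) c : edge_weight y c c = 1.
Proof. by rewrite /edge_weight big_pred0 // => j; rewrite eqxx. Qed.

Lemma adj_weight_cons k (y : 'I_k.+1 -> bool -> R) (c c' : cube k) b b' :
  adj_weight y (cube_cons c b) (cube_cons c' b') =
  if b == b' then adj_weight (ybehead y) c c' else if c == c' then y ord0 b' else 0.
Proof.
rewrite /adj_weight cube_adj_cons edge_weight_cons.
case: b; case: b' => /=; rewrite ?mul1r //.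
  by case: eqP => [<-|]; rewrite ?edge_weight_refl ?mulr1.
by case: eqP => [<-|]; rewrite ?edge_weight_refl ?mulr1.
Qed.

Lemma spanning_forest_gf k (y : 'I_k -> bool -> R) (z : R) :
  \sum_(f | spanning_oriented_forest f) forest_weight z y f
  = forest_gf (adj_weight y) (fun _ => z).
Proof.
pose along_edges (f : {ffun cube k -> option (cube k)}) :=
  [forall v, forall w, (f v == Some w) ==> cube_adj v w].
rewrite /forest_gf [RHS](bigID along_edges) /= [X in _ + X]big1 ?addr0 => [|f /andP[_]].
  (* The second conjunct of spanning_oriented_forest is acyclic f, unfolded. *)
  apply: eq_big => [f | f /andP[adj _]]; first by rewrite andbC.
  apply: eq_bigr => v _; case fv: (f v) => [w|] //=.
  by rewrite /adj_weight (implyP (forallP (forallP adj v) w)) // fv.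
rewrite negb_forall => /existsP[v]; rewrite negb_forall => /existsP[w].
rewrite negb_imply => /andP[/eqP fv nadj].
by rewrite /forest_wt (bigD1 v) //= fv /= /adj_weight (negbTE nadj) mul0r.
Qed.

Definition cube_w k (y : 'I_k -> bool -> R) (i j : 'I_(pow2 k)) : R :=
  adj_weight y (cube_of_ord i) (cube_of_ord j).

Definition cube_laplacian k (y : 'I_k -> bool -> R) (z : R) : 'M[R]_(pow2 k) :=
  laplacian (cube_w y) (fun _ => z).

Section CubeBlocks.
Variables (k : nat) (y : 'I_k.+1 -> bool -> R).
Local Notation up := (lshift (pow2 k)).
Local Notation down := (rshift (pow2 k)).

Lemma cube_w_up_up a b : cube_w y (up a) (up b) = cube_w (ybehead y) a b.
Proof. by rewrite /cube_w !cube_of_ord_lshift adj_weight_cons. Qed.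

Lemma cube_w_down_down a b : cube_w y (down a) (down b) = cube_w (ybehead y) a b.
Proof. by rewrite /cube_w !cube_of_ord_rshift adj_weight_cons. Qed.

Lemma cube_w_up_down a b : cube_w y (up a) (down b) = if a == b then y ord0 true else 0.
Proof.
rewrite /cube_w cube_of_ord_lshift cube_of_ord_rshift adj_weight_cons.
by rewrite (inj_eq (@cube_of_ord_inj k)).
Qed.

Lemma cube_w_down_up a b : cube_w y (down a) (up b) = if a == b then y ord0 false else 0.
Proof.
rewrite /cube_w cube_of_ord_lshift cube_of_ord_rshift adj_weight_cons.
by rewrite (inj_eq (@cube_of_ord_inj k)).
Qed.

Lemma sum_cube_w_up a :
  \sum_(u | u != up a) cube_w y (up a) u
  = \sum_(u | u != a) cube_w (ybehead y) a u + y ord0 true.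
Proof.
rewrite big_split_ord /=; congr (_ + _).
  by apply: eq_big => u; rewrite ?eq_lshift ?cube_w_up_up.
rewrite -[RHS](sum_pred1 a); apply: eq_big => u; first by rewrite eq_rlshift.
by rewrite cube_w_up_down.
Qed.

Lemma sum_cube_w_down a :
  \sum_(u | u != down a) cube_w y (down a) u
  = \sum_(u | u != a) cube_w (ybehead y) a u + y ord0 false.
Proof.
rewrite big_split_ord /= addrC; congr (_ + _).
  by apply: eq_big => u; rewrite ?eq_rshift ?cube_w_down_down.
rewrite -[RHS](sum_pred1 a); apply: eq_big => u; first by rewrite eq_lrshift.
by rewrite cube_w_down_up.
Qed.

Lemma cube_laplacian_block z : cube_laplacian y z =
  block_mx (cube_laplacian (ybehead y) z + (y ord0 true)%:M) (- (y ord0 true)%:M)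
           (- (y ord0 false)%:M) (cube_laplacian (ybehead y) z + (y ord0 false)%:M).
Proof.
apply/matrixP => i j.
case: (split_ordP i) => a ->; case: (split_ordP j) => b ->.
- rewrite block_mxEul [LHS]mxE eq_lshift sum_cube_w_up !mxE.
  by case: eqP => [->|_]; rewrite ?mulr1n ?mulr0n ?addr0 ?addrA ?cube_w_up_up.
- rewrite block_mxEur [LHS]mxE eq_lrshift cube_w_up_down !mxE.
  by case: eqP => _; rewrite ?mulr1n ?mulr0n ?oppr0.
- rewrite block_mxEdl [LHS]mxE eq_rlshift cube_w_down_up !mxE.
  by case: eqP => _; rewrite ?mulr1n ?mulr0n ?oppr0.
- rewrite block_mxEdr [LHS]mxE eq_rshift sum_cube_w_down !mxE.
  by case: eqP => [->|_]; rewrite ?mulr1n ?mulr0n ?addr0 ?addrA ?cube_w_down_down.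
Qed.

End CubeBlocks.

Definition subset_prod k (y : 'I_k -> bool -> R) (z : R) : R :=
  \prod_(J : {set 'I_k}) (z + \sum_(i in J) (y i false + y i true)).

Lemma subset_prod_cube k (y : 'I_k -> bool -> R) z :
  subset_prod y z = \prod_(c : cube k) (z + \sum_(i | c i) (y i false + y i true)).
Proof.
rewrite /subset_prod (reindex (fun c : cube k => [set i | c i])) /=; last first.
  apply: onW_bij; exists (fun J : {set 'I_k} => [ffun i => i \in J]).
    by move=> c; apply/ffunP => i; rewrite ffunE inE.
  by move=> J; apply/setP => i; rewrite inE ffunE.
by apply: eq_bigr => c _; congr (_ + _); apply: eq_bigl => i; rewrite inE.
Qed.

Lemma sum_cube_cons k (s : 'I_k.+1 -> R) (c : cube k) b :
  \sum_(i | cube_cons c b i) s i = (if b then s ord0 else 0) + \sum_(j | c j) s (lift ord0 j).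
Proof.
rewrite big_mkcond big_ord_recl cube_cons0 [in RHS]big_mkcond.
by congr (_ + _); apply: eq_bigr => j _; rewrite cube_cons_lift.
Qed.

Lemma subset_prod_rec k (y : 'I_k.+1 -> bool -> R) z :
  subset_prod y z
  = subset_prod (ybehead y) z * subset_prod (ybehead y) (z + (y ord0 false + y ord0 true)).
Proof.
rewrite !subset_prod_cube (reindex (fun q : cube k * bool => cube_cons q.1 q.2)) /=; last first.
  apply: onW_bij; exists (fun c : cube k.+1 => (cube_behead c, c ord0)).
    by case=> c b /=; rewrite cube_consK cube_cons0.
  by move=> c; rewrite cube_beheadK.
rewrite (eq_bigl (fun q : cube k * bool => xpredT q.1 && xpredT q.2)) //.
rewrite -(pair_big xpredT xpredT
           (fun c b => z + \sum_(i | cube_cons c b i) (y i false + y i true))) /=.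
under eq_bigr => c _ do rewrite big_bool /= !sum_cube_cons /= add0r.
rewrite big_split /= mulrC; congr (_ * _).
by apply: eq_bigr => c _; rewrite addrA.
Qed.

Lemma det_cube_laplacian k (y : 'I_k -> bool -> R) (z : R) :
  \det (cube_laplacian y z) = subset_prod y z.
Proof.
elim: k y z => [|k IH] y z.
  rewrite det_mx11 /cube_laplacian mxE eqxx big_pred0 => [|u]; last by rewrite (ord1 u) eqxx.
  rewrite addr0 /subset_prod (big_pred1 set0) => [|J]; first by rewrite big_set0 addr0.
  by rewrite /= (_ : J = set0) ?eqxx //; apply/setP => -[].
rewrite cube_laplacian_block det_block_scalar subset_prod_rec !IH.
have := IH (ybehead y) (z + (y ord0 true + y ord0 false)).
by rewrite /cube_laplacian -laplacian_add_scalar => ->; rewrite (addrC (y ord0 true)).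
Qed.

End CubeWeights.

Theorem corollary6p1 (k : nat) (hk : (0 < k)%N) (R : comPzRingType)
  (z : R) (y : 'I_k -> bool -> R) :
  \sum_(f : {ffun cube k -> option (cube k)} | spanning_oriented_forest f)
     forest_weight z y f
  = \prod_(J : {set 'I_k}) (z + \sum_(i in J) (y i false + y i true)).
Proof.
rewrite spanning_forest_gf -(forest_gf_conj (@cube_of_ordK k) (@ord_of_cubeK k)).
by rewrite -det_laplacian det_cube_laplacian.
Qed.
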